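(* Fix $\delta\in(0,1]$. If a random variable $\xi\ge0$ has a heavy-tailed distribution, then there exists a function $h:\mathbf R^+\to\mathbf R^+$ such that: (i) $h$ is subadditive, i.e. $h(x)\le h(y)+h(x-y)$ for all $0\le y\le x$; (ii) $h(x)=o(x)$ as $x\to\infty$; (iii) $\mathbf E e^{h(\xi)}\le 1+\delta$; (iv) $\mathbf E\,\xi e^{h(\xi)}=\infty$.
   Context: A distribution $F$ on $[0,\infty)$ is heavy-tailed if $\int_0^\infty e^{\gamma x}F(dx)=\infty$ for every $\gamma>0$. *)

From HB Require Import structures.
From mathcomp Require Import all_boot all_order all_algebra.
From mathcomp Require Import all_classical all_reals all_analysis.
Set Implicit Arguments. Unset Strict Implicit. Unset Printing Implicit Defensive.
Import Order.TTheory GRing.Theory Num.Theory.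
Import numFieldNormedType.Exports.
Local Open Scope classical_set_scope.
Local Open Scope ring_scope.

Definition heavy_tailed (R : realType) (F : set R -> \bar R) : Prop :=
  forall g : R, 0 < g ->
    (\int[F]_(x in [set x : R | (0 <= x)%R]) (expR (g * x))%:E = +oo)%E.

From HB Require Import structures.
From mathcomp Require Import all_boot all_order all_algebra.
From mathcomp Require Import all_classical all_reals all_analysis.
From mathcomp Require Import ring lra measurable_realfun.
Set Implicit Arguments. Unset Strict Implicit. Unset Printing Implicit Defensive.
Import Order.TTheory GRing.Theory Num.Theory Num.Def.
Import numFieldNormedType.Exports.
Local Open Scope classical_set_scope.
Local Open Scope ring_scope.

(* Take for h the lower envelope of lines
   L_k(x) = c_k + b_k (x - p_k) with breakpoints 0 = p_0 < p_1 < ..., where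
   L_{k+1} continues L_k at p_{k+1} and the slopes b_k > 0 decrease to 0:
   h is concave and nonnegative with h(0) = 0, hence subadditive, and
   h(x) = o(x).  On the block [p_k, p_{k+1}] the convexity of exp bounds the
   increase of e^h by b_k (x - p_k) e^{L_k(x)}, so with
   V_k = E (ξ_k - p_k) e^{L_k(ξ_k)}, ξ_k the clamp of ξ to the block, we get
   E e^{h(ξ)} <= 1 + Σ b_k V_k and E ξ e^{h(ξ)} >= Σ V_k.  As a function of
   p_{k+1}, V_k is continuous and, ξ being heavy-tailed, unbounded, so p_{k+1}
   can be chosen with 1 <= V_k <= e^{c_k + 1}; the slope
   b_k = δ 2^{-k-1} e^{-c_k - 1} then gives Σ b_k V_k <= δ and Σ V_k = ∞. *)

Lemma expR_sub_le {R : realType} (u v : R) : expR u - expR v <= (u - v) * expR u.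
Proof.
have -> : expR v = expR (v - u) * expR u by rewrite -expRD subrK.
have := expR_ge1Dx (v - u); have := expR_gt0 u; nra.
Qed.

Lemma measurable_EFin_nd_comp {R : realType} (d : measure_display)
    (T : measurableType d) (X : T -> R) (f : R -> R) :
  measurable_fun setT X -> {homo f : x y / x <= y} ->
  measurable_fun setT (fun w => (f (X w))%:E).
Proof.
move=> mX f_nd; apply/measurable_EFinP.
exact: measurableT_comp (nondecreasing_measurable measurableT f_nd) mX.
Qed.

Section truncated_mean.
Context {R : realType} (d : measure_display) (T : measurableType d).
Variables (P : probability T R) (X : {RV P >-> R}) (F : R -> R).
Hypothesis F_nd : {homo F : x y / x <= y}.
Hypothesis F_ge0 : forall x, 0 <= F x.

Definition truncated_mean q := (\int[P]_w (F (minr (X w) q))%:E)%E.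

Let F_min_nd q : {homo (fun x => F (minr x q)) : x y / x <= y}.
Proof. by move=> x y xy; apply: F_nd; rewrite le_min2. Qed.

Let measurable_F_min q : measurable_fun setT (fun w => (F (minr (X w) q))%:E).
Proof. exact: measurable_EFin_nd_comp (F_min_nd q). Qed.

Lemma truncated_mean_le q : (truncated_mean q <= (F q)%:E)%E.
Proof.
apply: (@le_trans _ _ (\int[P]_w (cst (F q)%:E) w)%E).
  apply: ge0_le_integral => // [w _|w _]; rewrite lee_fin //.
  by apply: F_nd; rewrite ge_min lexx orbT.
by rewrite integral_cst //= probability_setT mule1.
Qed.

Lemma truncated_meanE q : truncated_mean q = (fine (truncated_mean q))%:E.
Proof.
rewrite fineK // ge0_fin_numE; last by apply: integral_ge0 => w _; rewrite lee_fin.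
by apply: le_lt_trans (truncated_mean_le q) _; rewrite ltey.
Qed.

Lemma truncated_mean_increment q q' : q <= q' ->
  0 <= fine (truncated_mean q') - fine (truncated_mean q) <= F q' - F q.
Proof.
move=> qq'; have dF0 : 0 <= F q' - F q by rewrite subr_ge0 F_nd.
have tm_le : (truncated_mean q <= truncated_mean q')%E.
  apply: ge0_le_integral => // w _; rewrite lee_fin //.
  by apply: F_nd; rewrite le_min2.
have tm_ge : (truncated_mean q' <= truncated_mean q + (F q' - F q)%:E)%E.
  rewrite -[X in (_ <= _ + X)%E]mule1 -(probability_setT P) -integral_cst //.
  rewrite -ge0_integralD // => [|w _]; rewrite ?lee_fin //.
  apply: ge0_le_integral => // [w _||w _]; first by rewrite lee_fin.
    exact: emeasurable_funD.
  rewrite /= -EFinD lee_fin; case: (leP (X w) q) => xq.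
    by rewrite !min_l ?(le_trans xq) // lerDl.
  by rewrite addrC subrK F_nd // ge_min lexx orbT.
move: tm_le tm_ge; rewrite (truncated_meanE q) (truncated_meanE q') -EFinD !lee_fin.
by move=> *; apply/andP; split; lra.
Qed.

Lemma dist_truncated_mean_le q q' :
  `|fine (truncated_mean q) - fine (truncated_mean q')| <= `|F q - F q'|.
Proof.
wlog qq' : q q' / q <= q'.
  move=> H; case: (leP q q') => [/H//|/ltW/H].
  by rewrite distrC [X in _ <= X -> _]distrC.
have /andP[d0 dF] := truncated_mean_increment qq'.
by rewrite distrC ger0_norm // distrC ger0_norm // subr_ge0 F_nd.
Qed.

Lemma truncated_mean_continuous : continuous F ->
  continuous (fun q => fine (truncated_mean q)).
Proof.
move=> F_cont q; apply/cvgrPdist_lt => e e0.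
near=> q'; apply: le_lt_trans (dist_truncated_mean_le q q') _.
by near: q'; exact: (cvgrPdist_lt _ _).1 (F_cont q) e e0.
Unshelve. all: by end_near.
Qed.

Lemma truncated_mean_cvg (a : nat -> R) : nondecreasing_seq a ->
  a @ \oo --> +oo ->
  truncated_mean (a n) @[n --> \oo] --> (\int[P]_w (F (X w))%:E)%E.
Proof.
move=> a_nd /cvgryPge a_oo.
have lim_trunc w : limn (fun n => (F (minr (X w) (a n)))%:E) = (F (X w))%:E.
  apply/cvg_lim => //; apply: cvg_near_cst; near=> n.
  by rewrite min_l //; near: n; exact: a_oo.
rewrite (eq_integral (fun w => limn (fun n => (F (minr (X w) (a n)))%:E))); last first.
  by move=> w _; rewrite lim_trunc.
apply: cvg_monotone_convergence => // [n w _|w _ m n mn]; rewrite lee_fin //.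
by apply: F_nd; rewrite le_min2 // a_nd.
Unshelve. all: by end_near.
Qed.

End truncated_mean.

Definition line {R : realType} (p c b x : R) := c + b * (x - p).

(* [b * ramp p c b x] bounds the increase of [expR \o line p c b] over [[p, x]]. *)
Definition ramp {R : realType} (p c b x : R) := (x - p) * expR (line p c b x).

Section ramp.
Context {R : realType}.
Variables (p c b : R).

Lemma ramp_max_ge0 x : 0 <= ramp p c b (maxr x p).
Proof. by rewrite mulr_ge0 ?expR_ge0 // subr_ge0 le_max lexx orbT. Qed.

Lemma ramp_max_nd : 0 <= b -> {homo (fun x => ramp p c b (maxr x p)) : x y / x <= y}.
Proof.
move=> b0 x y xy; have pxy : maxr x p <= maxr y p by rewrite le_max2.
apply: ler_pM; rewrite ?subr_ge0 ?le_max ?lexx ?orbT ?lerD2r //.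
by rewrite ler_expR lerD2l ler_wpM2l // lerD2r.
Qed.

Lemma ramp_max_continuous : continuous (fun x => ramp p c b (maxr x p)).
Proof.
have max_cont : continuous (fun x : R => maxr x p).
  by move=> x; apply: continuous_max; [exact: cvg_id | exact: cvg_cst].
move=> x; apply: continuous_comp (max_cont x) _ => /=.
apply: continuousM; first by apply: continuousB; [exact: cvg_id | exact: cvg_cst].
apply: continuous_comp; last exact: continuous_expR.
apply: continuousD; first exact: cvg_cst.
apply: continuousM; first exact: cvg_cst.
by apply: continuousB; [exact: cvg_id | exact: cvg_cst].
Qed.

End ramp.

Section block_step.
Context {R : realType} (d : measure_display) (T : measurableType d).
Variables (P : probability T R) (X : {RV P >-> R}).
Hypothesis heavy : forall g, 0 < g -> (\int[P]_w (expR (g * X w))%:E = +oo)%E.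
Variables (p c b : R).
Hypotheses (c_ge0 : 0 <= c) (b_gt0 : 0 < b) (b_le1 : b <= 1).

Let F x := ramp p c b (maxr x p).

Let F_nd : {homo F : x y / x <= y}.
Proof. exact/ramp_max_nd/ltW. Qed.

Lemma expR_le_ramp x : expR (b * x) <= expR (b * (p + 1)) + expR (b * p) * F x.
Proof.
have F0 : 0 <= expR (b * p) * F x by rewrite mulr_ge0 ?ramp_max_ge0 ?expR_ge0.
case: (leP x (p + 1)) => xp.
  by apply: ler_wpDr => //; rewrite ler_expR ler_pM2l.
apply: ler_wpDl; first exact: expR_ge0.
have -> : expR (b * x) = expR (b * p) * expR (b * (x - p)).
  by rewrite -expRD; congr expR; ring.
rewrite ler_pM2l ?expR_gt0 // /F max_l; last by lra.
rewrite /ramp -[leLHS]mul1r ler_pM ?expR_ge0 //; first lra.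
by rewrite ler_expR /line lerDr.
Qed.

Lemma ramp_mean_infinite : (\int[P]_w (F (X w))%:E = +oo)%E.
Proof.
have mF : measurable_fun setT (fun w => (F (X w))%:E) by exact: measurable_EFin_nd_comp.
have F_ge0 w : (0 <= (F (X w))%:E)%E by rewrite lee_fin ramp_max_ge0.
have : (+oo <= (expR (b * (p + 1)))%:E + (expR (b * p))%:E * \int[P]_w (F (X w))%:E)%E.
  rewrite -(heavy b_gt0) -[X in (_ <= X + _)%E]mule1 -(probability_setT P).
  rewrite -integral_cst // -ge0_integralZl ?lee_fin ?expR_ge0 // -ge0_integralD //.
  - apply: ge0_le_integral => // [||w _].
    + apply: (measurable_EFin_nd_comp (f := fun x => expR (b * x))) => // x y xy.
      by rewrite ler_expR ler_pM2l.
    + by apply: emeasurable_funD => //; exact: measurable_funeM.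
    + by rewrite /= -EFinM -EFinD lee_fin expR_le_ramp.
  - by move=> w _; rewrite /= lee_fin expR_ge0.
  - by move=> w _; rewrite mule_ge0 ?F_ge0 // lee_fin expR_ge0.
  - exact: measurable_funeM.
have : (0 <= \int[P]_w (F (X w))%:E)%E by apply: integral_ge0 => w _; exact: F_ge0.
by case: (\int[P]_w (F (X w))%:E)%E => // r _; rewrite leye_eq.
Qed.

Lemma block_step : exists2 q, p + 1 <= q &
  (1 <= truncated_mean X F q <= (expR (c + 1))%:E)%E.
Proof.
have F_ge0 x : 0 <= F x by exact: ramp_max_ge0.
pose G q := fine (truncated_mean X F q).
have GE q : truncated_mean X F q = (G q)%:E := truncated_meanE X F_nd F_ge0 q.
have ec : 1 <= expR (c + 1) by apply: le_trans (expR_ge1Dx _); rewrite lerDl addr_ge0.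
case: (lerP 1 (G (p + 1))) => G1.
  exists (p + 1) => //; rewrite GE lee_fin G1 -GE /=.
  apply: le_trans (truncated_mean_le X F_nd F_ge0 _) _.
  rewrite lee_fin /F max_l ?lerDl // /ramp /line addrAC subrr add0r mul1r mulr1.
  by rewrite ler_expR lerD2l.
have [n Gn] : exists n, 1 <= G (p + 1 + n%:R).
  have a_nd : nondecreasing_seq (fun n => p + 1 + n%:R).
    by move=> m n mn; rewrite lerD2l ler_nat.
  have a_cvg : (fun n => p + 1 + n%:R) @ \oo --> +oo.
    apply/cvgryPge => A; near=> n; rewrite -lerBlDl.
    by near: n; exact: nbhs_infty_ger.
  have := truncated_mean_cvg (X := X) F_nd F_ge0 a_nd a_cvg.
  rewrite ramp_mean_infinite => /cvgeyPge/(_ 1)[N _ GN].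
  by exists N; rewrite -lee_fin -GE; exact: (GN N (leqnn N)).
have pn : p + 1 <= p + 1 + n%:R by rewrite lerDl.
have G_cont : {within `[p + 1, p + 1 + n%:R], continuous G}.
  exact/continuous_subspaceT/truncated_mean_continuous/ramp_max_continuous.
have [|q] := IVT pn G_cont (v := 1); first by rewrite ge_min le_max (ltW G1) Gn orbT.
rewrite in_itv /= => /andP[q_ge _] Gq; exists q => //.
by rewrite GE Gq !lee_fin lexx ec.
Unshelve. all: by end_near.
Qed.

End block_step.

Section concave_envelope.
Context {R : realType}.
Variables (p c b : nat -> R).
Hypothesis p0 : p 0%N = 0.
Hypothesis c0 : c 0%N = 0.
Hypothesis p_gap : forall k, p k + 1 <= p k.+1.
Hypothesis cS : forall k, c k.+1 = line (p k) (c k) (b k) (p k.+1).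
Hypothesis b_gt0 : forall k, 0 < b k.
Hypothesis b_noninc : nonincreasing_seq b.

Let L k := line (p k) (c k) (b k).

Lemma p_nd : nondecreasing_seq p.
Proof. by apply/nondecreasing_seqP => k; have := p_gap k; lra. Qed.

Lemma p_ge_nat k : k%:R <= p k.
Proof.
elim: k => [|k IH]; first by rewrite p0.
by rewrite -natr1; have := p_gap k; lra.
Qed.

Lemma line_le_earlier k j x : (j <= k)%N -> p k <= x -> L k x <= L j x.
Proof.
elim: k => [|k IH]; first by rewrite leqn0 => /eqP ->.
rewrite leq_eqVlt => /orP[/eqP -> //|]; rewrite ltnS => jk xp.
have pk : p k <= p k.+1 by exact: p_nd.
apply: le_trans (IH jk (le_trans pk xp)).
have bb : 0 <= b k - b k.+1 by rewrite subr_ge0 b_noninc.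
have xp1 : 0 <= x - p k.+1 by rewrite subr_ge0.
by have := mulr_ge0 bb xp1; rewrite /L /line cS /line; nra.
Qed.

Lemma line_le_later k j x : (k <= j)%N -> x <= p k.+1 -> L k x <= L j x.
Proof.
move=> /subnK <-; elim: (j - k)%N => [|n IH] xp; first by rewrite add0n.
apply: (le_trans (IH xp)); rewrite addSn.
have xp' : x <= p (n + k).+1 by apply: (le_trans xp); apply: p_nd; rewrite ltnS leq_addl.
have bb : 0 <= b (n + k) - b (n + k).+1 by rewrite subr_ge0 b_noninc.
have xp1 : 0 <= p (n + k).+1 - x by rewrite subr_ge0.
by have := mulr_ge0 bb xp1; rewrite /L /line cS /line; nra.
Qed.

Lemma line_nd k : {homo L k : x y / x <= y}.
Proof. by move=> x y xy; rewrite /L /line lerD2l ler_wpM2l ?(ltW (b_gt0 k)) ?lerD2r. Qed.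

Lemma line_ge0 k x : 0 <= x -> 0 <= L k x.
Proof.
move=> x0; have L00 : L 0 0 = 0 by rewrite /L /line p0 c0 subrr mulr0 addr0.
have p1 : 0 <= p 1 by have := p_gap 0; rewrite p0; lra.
apply: (@le_trans _ _ (L k 0)); first by rewrite -{1}L00; exact: line_le_later.
exact: line_nd.
Qed.

Lemma line_add_le k j x y : (j <= k)%N -> y <= x -> L k x <= L k y + L j (x - y).
Proof.
move=> jk yx; have bxy : 0 <= (b j - b k) * (x - y).
  by rewrite mulr_ge0 // subr_ge0 // b_noninc.
by have := line_ge0 j (lexx 0); rewrite /L /line; nra.
Qed.

(* Clamping at 0, where every line is nonnegative, keeps the family bounded below. *)
Definition envelope x := inf (range (fun k => L k (maxr x 0))).

Let envelope_le_max k x : envelope x <= L k (maxr x 0).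
Proof.
apply: inf_lbound; last by exists k.
by exists 0 => _ [j _ <-]; apply: line_ge0; rewrite le_max lexx orbT.
Qed.

Let le_envelope_max a x : (forall k, a <= L k (maxr x 0)) -> a <= envelope x.
Proof.
by move=> aL; apply: lb_le_inf => [|_ [k _ <-]//]; exists (L 0 (maxr x 0)), 0%N.
Qed.

Lemma envelope_le k x : 0 <= x -> envelope x <= L k x.
Proof. by move=> x0; rewrite -{2}(max_l x0). Qed.

Lemma le_envelope a x : 0 <= x -> (forall k, a <= L k x) -> a <= envelope x.
Proof. by move=> x0 aL; apply: le_envelope_max => k; rewrite max_l. Qed.

Lemma envelope_ge0 x : 0 <= envelope x.
Proof. by apply: le_envelope_max => k; apply: line_ge0; rewrite le_max lexx orbT. Qed.

Lemma envelope_nd : {homo envelope : x y / x <= y}.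
Proof.
move=> x y xy; apply: le_envelope_max => k.
by apply: le_trans (envelope_le_max k x) (line_nd k _); rewrite le_max2.
Qed.

Lemma envelope_on_block k x : p k <= x <= p k.+1 -> envelope x = L k x.
Proof.
move=> /andP[pkx xpk]; have x0 : 0 <= x by apply: le_trans pkx; exact: le_trans (p_ge_nat k).
apply/eqP; rewrite eq_le envelope_le //= le_envelope // => j.
by case: (leqP j k) => [jk|/ltnW kj]; [exact: line_le_earlier | exact: line_le_later].
Qed.

Lemma envelope0 : envelope 0 = 0.
Proof.
have p01 : p 0%N <= 0 <= p 1 by rewrite p0 lexx /=; have := p_gap 0; rewrite p0; lra.
by rewrite (envelope_on_block p01) /L /line p0 c0 subrr mulr0 addr0.
Qed.

Lemma envelope_subadditive x y : 0 <= y -> y <= x ->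
  envelope x <= envelope y + envelope (x - y).
Proof.
move=> y0 yx; have x0 := le_trans y0 yx; have xy0 : 0 <= x - y by rewrite subr_ge0.
rewrite -lerBlDr; apply: le_envelope => // n.
rewrite lerBlDr addrC -lerBlDr; apply: le_envelope => // m.
rewrite lerBlDr addrC; case: (leqP m n) => [mn|/ltnW nm].
  exact: le_trans (envelope_le n x0) (line_add_le mn yx).
apply: le_trans (envelope_le m x0) _; rewrite addrC.
have yE : x - (x - y) = y by ring.
by have := @line_add_le m n x (x - y) nm; rewrite yE gerBl; apply.
Qed.

Lemma envelope_measurable : measurable_fun setT envelope.
Proof. exact: nondecreasing_measurable envelope_nd. Qed.

Lemma envelope_littleo : b @ \oo --> 0 -> (fun x => envelope x / x) @ +oo --> 0.
Proof.
move=> b_cvg0; apply/cvgrPdist_lt => e e0.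
have [K bK] : exists K, b K < e / 2.
  have /cvgrPdist_lt/(_ (e / 2))/(_ _)[|N _ bN] := b_cvg0; first by rewrite divr_gt0.
  by exists N; have := bN N (leqnn N); rewrite sub0r normrN ger0_norm // (ltW (b_gt0 N)).
near=> x.
have x_gt0 : 0 < x by near: x; apply: nbhs_pinfty_gt; rewrite num_real.
have x_big : 2 * c K / e < x by near: x; apply: nbhs_pinfty_gt; rewrite num_real.
rewrite sub0r normrN ger0_norm ?divr_ge0 ?envelope_ge0 ?(ltW x_gt0) //.
rewrite ltr_pdivrMr //; apply: le_lt_trans (envelope_le K (ltW x_gt0)) _.
have bKx : b K * x < e / 2 * x by rewrite ltr_pM2r.
have bKp : 0 <= b K * p K.
  by apply: mulr_ge0; [exact: ltW | exact: le_trans (p_ge_nat K)].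
move: x_big; rewrite ltr_pdivrMr // /L /line; lra.
Unshelve. all: by end_near.
Qed.

Let clamp k x := maxr (minr x (p k.+1)) (p k).

Let clamp_in k x : p k <= clamp k x <= p k.+1.
Proof. by rewrite le_max lexx orbT ge_max ge_min lexx orbT /=; exact: p_nd. Qed.

Let clamp_left k x : x <= p k -> clamp k x = p k.
Proof. by move=> xk; rewrite /clamp max_r // ge_min xk. Qed.

Let clamp_right k x : p k < x -> clamp k x = minr x (p k.+1).
Proof. by move=> xk; rewrite /clamp max_l // le_min (ltW xk) p_nd. Qed.

Let envelope_clamp k x : envelope (clamp k x) = L k (clamp k x).
Proof. exact/envelope_on_block/clamp_in. Qed.

Lemma expR_envelope_increment k x :
  expR (envelope (minr x (p k.+1))) <=
  expR (envelope (minr x (p k))) + b k * ramp (p k) (c k) (b k) (clamp k x).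
Proof.
case: (leP x (p k)) => xk.
  rewrite clamp_left // min_l ?(le_trans xk) ?p_nd //.
  by rewrite /ramp subrr mul0r mulr0 addr0.
have pk_in : p k <= p k <= p k.+1 by rewrite lexx p_nd.
rewrite -clamp_right // envelope_clamp (envelope_on_block pk_in).
rewrite -lerBlDl; apply: le_trans (expR_sub_le _ _) _.
by rewrite /ramp /L /line subrr mulr0 addr0 addrAC subrr add0r mulrA.
Qed.

Lemma sum_clamp N x : 0 <= x -> \sum_(k < N) (clamp k x - p k) = minr x (p N).
Proof.
move=> x0; elim: N => [|N IH]; first by rewrite big_ord0 p0 min_r.
rewrite big_ord_recr /= IH; case: (leP x (p N)) => xN.
  by rewrite clamp_left // min_l ?(le_trans xN) ?p_nd // subrr addr0.
by rewrite clamp_right // addrC subrK.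
Qed.

Lemma ramp_clamp_le k x :
  ramp (p k) (c k) (b k) (clamp k x) <= (clamp k x - p k) * expR (envelope x).
Proof.
case: (leP x (p k)) => xk; first by rewrite clamp_left // /ramp subrr !mul0r.
rewrite /ramp -/(L k) -envelope_clamp; apply: ler_wpM2l.
  by rewrite subr_ge0; have /andP[] := clamp_in k x.
by rewrite ler_expR clamp_right // envelope_nd // ge_min lexx.
Qed.

Lemma sum_ramp_clamp_le N x : 0 <= x ->
  \sum_(k < N) ramp (p k) (c k) (b k) (clamp k x) <= x * expR (envelope x).
Proof.
move=> x0; apply: (@le_trans _ _ (\sum_(k < N) (clamp k x - p k) * expR (envelope x))).
  by apply: ler_sum => k _; exact: ramp_clamp_le.
by rewrite -mulr_suml sum_clamp // ler_wpM2r ?ge_min ?lexx.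
Qed.

Lemma p_cvgy : p @ \oo --> +oo.
Proof.
apply/cvgryPge => A; near=> n; apply: le_trans (p_ge_nat n).
by near: n; exact: nbhs_infty_ger.
Unshelve. all: by end_near.
Qed.

Section envelope_moments.
Variables (d : measure_display) (T : measurableType d).
Variables (P : probability T R) (X : {RV P >-> R}).
Hypothesis X_ge0 : forall w, 0 <= X w.
Variables (eps : nat -> R) (delta : R).
Hypothesis eps_sum_le : forall N, \sum_(k < N) eps k <= delta.

Let block_mean k := (\int[P]_w (ramp (p k) (c k) (b k) (clamp k (X w)))%:E)%E.

Hypothesis block_mean_ge1 : forall k, (1 <= block_mean k)%E.
Hypothesis block_mean_cost : forall k, ((b k)%:E * block_mean k <= (eps k)%:E)%E.

Let measurable_ramp_clamp k :
  measurable_fun setT (fun w => (ramp (p k) (c k) (b k) (clamp k (X w)))%:E).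
Proof.
apply: (measurable_EFin_nd_comp (f := fun x => ramp (p k) (c k) (b k) (clamp k x))) => //.
by move=> x y xy; apply: ramp_max_nd; [exact: ltW | rewrite le_min2].
Qed.

Let ramp_clamp_ge0 k w : (0 <= (ramp (p k) (c k) (b k) (clamp k (X w)))%:E)%E.
Proof. by rewrite lee_fin ramp_max_ge0. Qed.

Let expR_envelope_nd : {homo expR \o envelope : x y / x <= y}.
Proof. by move=> x y xy; rewrite /= ler_expR envelope_nd. Qed.

Let expR_envelope_ge0 x : 0 <= (expR \o envelope) x.
Proof. exact: expR_ge0. Qed.

Let measurable_expR_envelope_min q :
  measurable_fun setT (fun w => (expR (envelope (minr (X w) q)))%:E).
Proof.
apply: (measurable_EFin_nd_comp (f := fun x => expR (envelope (minr x q)))) => //.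
by move=> x y xy; rewrite ler_expR envelope_nd // le_min2.
Qed.

Lemma expR_envelope_truncated_mean_le N :
  (truncated_mean X (expR \o envelope) (p N) <= (1 + \sum_(k < N) eps k)%:E)%E.
Proof.
elim: N => [|N IH].
  rewrite /truncated_mean big_ord0 addr0.
  under eq_integral => w _ do rewrite p0 /= (min_r (X_ge0 w)) envelope0 expR0.
  by rewrite integral_cst //= probability_setT mul1e.
apply: (@le_trans _ _ (\int[P]_w ((expR (envelope (minr (X w) (p N))))%:E
    + (b N)%:E * (ramp (p N) (c N) (b N) (clamp N (X w)))%:E))%E).
  apply: ge0_le_integral => // [w _|||w _].
  - by rewrite lee_fin expR_envelope_ge0.
  - exact: measurable_expR_envelope_min.
  - by apply: emeasurable_funD; last exact: measurable_funeM.
  - by rewrite -EFinM -EFinD lee_fin expR_envelope_increment.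
rewrite ge0_integralD //; last 2 first.
- by move=> w _; rewrite mule_ge0 // lee_fin (ltW (b_gt0 N)).
- exact: measurable_funeM.
rewrite ge0_integralZl //; last by rewrite lee_fin (ltW (b_gt0 N)).
by rewrite big_ord_recr /= addrA EFinD leeD.
Qed.

Lemma expR_envelope_mean_le :
  (\int[P]_w (expR (envelope (X w)))%:E <= (1 + delta)%:E)%E.
Proof.
have cvg_trunc := truncated_mean_cvg (X := X) expR_envelope_nd expR_envelope_ge0 p_nd p_cvgy.
rewrite -(cvg_lim _ cvg_trunc) //; apply: lime_le; first exact: cvgP cvg_trunc.
apply: nearW => N; apply: le_trans (expR_envelope_truncated_mean_le N) _.
by rewrite lee_fin lerD2l.
Qed.

Lemma mul_expR_envelope_mean :
  (\int[P]_w (X w * expR (envelope (X w)))%:E = +oo)%E.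
Proof.
have mean_ge N : ((N%:R)%:E <= \int[P]_w (X w * expR (envelope (X w)))%:E)%E.
  apply: (@le_trans _ _ (\sum_(k < N) block_mean k)%E).
    have -> : ((N%:R)%:E = \sum_(k < N) (1%:E : \bar R))%E.
      by rewrite sumEFin sumr_const card_ord.
    by apply: lee_sum => k _; exact: block_mean_ge1.
  rewrite -ge0_integral_sum //; apply: ge0_le_integral => // [w _|||w _].
  - exact: sume_ge0.
  - exact: emeasurable_sum.
  - apply/measurable_EFinP; apply: measurable_funM => //.
    apply: measurableT_comp => //; exact: measurableT_comp envelope_measurable _.
  - by rewrite sumEFin lee_fin sum_ramp_clamp_le.
apply: eq_infty => r; apply: le_trans (mean_ge (truncn r).+1).
by rewrite lee_fin; exact: ltW (truncnS_gt r).
Qed.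

End envelope_moments.

End concave_envelope.

Lemma heavy_tailed_expR_mean {R : realType} (d : measure_display)
    (T : measurableType d) (P : probability T R) (X : {RV P >-> R}) :
  heavy_tailed (distribution P X) ->
  forall g, 0 < g -> (\int[P]_w (expR (g * X w))%:E = +oo)%E.
Proof.
move=> heavy g g0; apply/eqP; rewrite -leye_eq -(heavy g g0).
have mexp : measurable_fun setT (fun x : R => (expR (g * x))%:E).
  apply/measurable_EFinP; apply: nondecreasing_measurable => // x y xy.
  by rewrite ler_expR ler_pM2l.
rewrite -(ge0_integral_distribution _ mexp) => [|x]; last by rewrite lee_fin expR_ge0.
apply: ge0_subset_integral => //.
have -> : [set x : R | 0 <= x] = `[0, +oo[%classic by rewrite set_itvE.
exact: measurable_itv.
Qed.

Definition budget {R : realType} (delta : R) k := delta / 2 ^+ k.+1.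

(* Chosen so that a block mean of at most [expR (c + 1)] costs at most [budget delta k]. *)
Definition block_slope {R : realType} (delta : R) k (c : R) := budget delta k * expR (- c - 1).

Section budget.
Context {R : realType}.
Variable delta : R.
Hypothesis delta_gt0 : 0 < delta.

Lemma budget_gt0 k : 0 < budget delta k.
Proof. by rewrite divr_gt0 // exprn_gt0. Qed.

Lemma budget_sum_le N : \sum_(k < N) budget delta k <= delta.
Proof.
have -> : \sum_(k < N) budget delta k = delta - delta / 2 ^+ N.
  elim: N => [|N IH]; first by rewrite big_ord0 expr0 divr1 subrr.
  rewrite big_ord_recr /= IH /budget exprS; field.
  by rewrite expf_neq0.
by rewrite gerBl divr_ge0 ?exprn_ge0 // ltW.
Qed.

Lemma budget_cvg0 : budget delta @ \oo --> 0.
Proof.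
have -> : budget delta = geometric (delta / 2) 2^-1.
  by apply/funext => k; rewrite /budget /geometric /= exprS invfM exprVn mulrA.
by apply: cvg_geometric; rewrite gtr0_norm // invf_lt1 // ltr1n.
Qed.

Lemma block_slope_gt0 k c : 0 < block_slope delta k c.
Proof. by rewrite mulr_gt0 ?expR_gt0 ?budget_gt0. Qed.

Lemma block_slope_le_budget k c : 0 <= c -> block_slope delta k c <= budget delta k.
Proof.
move=> c0; rewrite -[leRHS]mulr1 ler_pM2l ?budget_gt0 //.
by rewrite expR_le1; lra.
Qed.

Lemma block_slope_le1 k c : delta <= 1 -> 0 <= c -> block_slope delta k c <= 1.
Proof.
move=> delta_le1 c0; apply: le_trans (block_slope_le_budget k c0) _.
rewrite ler_pdivrMr ?exprn_gt0 // mul1r; apply: le_trans delta_le1 _.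
by rewrite exprn_ege1 // ler1n.
Qed.

Lemma block_slope_costE k c : block_slope delta k c * expR (c + 1) = budget delta k.
Proof.
by rewrite /block_slope -mulrA -expRD (_ : - c - 1 + (c + 1) = 0) ?expR0 ?mulr1 //; ring.
Qed.

Lemma block_slope_noninc (c : nat -> R) : nondecreasing_seq c ->
  nonincreasing_seq (fun k => block_slope delta k (c k)).
Proof.
move=> c_nd; apply/nonincreasing_seqP => k; apply: ler_pM.
- exact: ltW (budget_gt0 _).
- exact: expR_ge0.
- by rewrite /budget ler_pM2l // lef_pV2 ?posrE ?exprn_gt0 // ler_eXn2l ?ltr1n.
- by rewrite ler_expR lerD2r lerN2 c_nd.
Qed.

Lemma block_slope_cvg0 (c : nat -> R) : (forall k, 0 <= c k) ->
  (fun k => block_slope delta k (c k)) @ \oo --> 0.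
Proof.
move=> c_ge0; apply: (squeeze_cvgr (f := fun=> 0) (h := budget delta)).
- apply: nearW => k; rewrite block_slope_le_budget // andbT.
  exact: ltW (block_slope_gt0 k (c k)).
- exact: cvg_cst.
- exact: budget_cvg0.
Qed.

End budget.

Lemma dependent_choice (S : Type) (I : S -> Prop) (next : nat -> S -> S -> Prop)
    (s0 : S) :
  I s0 -> (forall k s, I s -> exists2 s', I s' & next k s s') ->
  exists f : nat -> S, f 0%N = s0 /\ forall k, next k (f k) (f k.+1).
Proof.
move=> Is0 step.
have /choice[g gP] : forall ks : nat * S, exists s', I ks.2 -> I s' /\ next ks.1 ks.2 s'.
  move=> [k s]; have [/(step k)[s' Is' ns']|nIs] := pselect (I s).
    by exists s'.
  by exists s.
pose f := fix f n := if n is k.+1 then g (k, f k) else s0.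
have If n : I (f n) by elim: n => // k IH; exact: (gP (k, f k) IH).1.
by exists f; split => // k; exact: (gP (k, f k) (If k)).2.
Qed.

Section breakpoints.
Context {R : realType} (d : measure_display) (T : measurableType d).
Variables (P : probability T R) (X : {RV P >-> R}).
Hypothesis heavy : forall g, 0 < g -> (\int[P]_w (expR (g * X w))%:E = +oo)%E.
Variable delta : R.
Hypotheses (delta_gt0 : 0 < delta) (delta_le1 : delta <= 1).

Lemma breakpoints_exist : exists p c : nat -> R,
  [/\ p 0%N = 0, c 0%N = 0, forall k, p k + 1 <= p k.+1,
      forall k, c k.+1 = line (p k) (c k) (block_slope delta k (c k)) (p k.+1)
    & forall k, (1 <= \int[P]_w (ramp (p k) (c k) (block_slope delta k (c k))
                   (maxr (minr (X w) (p k.+1)) (p k)))%:E <= (expR (c k + 1))%:E)%E].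
Proof.
pose next k (s s' : R * R) := let b := block_slope delta k s.2 in
  [/\ s.1 + 1 <= s'.1, s'.2 = line s.1 s.2 b s'.1 &
      (1 <= truncated_mean X (fun x => ramp s.1 s.2 b (maxr x s.1)) s'.1
         <= (expR (s.2 + 1))%:E)%E].
have step k (s : R * R) : 0 <= s.2 -> exists2 s', 0 <= s'.2 & next k s s'.
  case: s => p c /= c0; have b_gt0 := block_slope_gt0 delta_gt0 k c.
  have b_le1 := block_slope_le1 delta_gt0 k delta_le1 c0.
  have [q pq q_mean] := block_step heavy p c0 b_gt0 b_le1.
  exists (q, line p c (block_slope delta k c) q) => //=.
  by rewrite /line addr_ge0 // mulr_ge0 ?(ltW b_gt0) // subr_ge0 (le_trans _ pq) ?lerDl.
have [s [s0 sS]] := dependent_choice (lexx (0 : R)) step (s0 := (0, 0)).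
exists (fun k => (s k).1), (fun k => (s k).2); rewrite s0.
by split => // k; have [] := sS k.
Qed.

End breakpoints.

Theorem lemma1 (d : measure_display) (T : measurableType d) (R : realType)
  (P : probability T R) (xi : {RV P >-> R}) (delta : R) :
  0 < delta -> delta <= 1 ->
  (forall w, 0 <= xi w) ->
  heavy_tailed (distribution P xi) ->
  exists h : R -> R,
    measurable_fun setT h /\
    [/\ (forall x, 0 <= x -> 0 <= h x),
        (forall x y, 0 <= y -> y <= x -> h x <= h y + h (x - y)),
        (fun x => h x / x) @ +oo --> 0,
        (\int[P]_w (expR (h (xi w)))%:E <= (1 + delta)%:E)%E
      & (\int[P]_w (xi w * expR (h (xi w)))%:E = +oo)%E].
Proof.
move=> delta_gt0 delta_le1 xi_ge0 /heavy_tailed_expR_mean heavy.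
have [p [c [p0 c0 p_gap cS block_mean]]] := breakpoints_exist heavy delta_gt0 delta_le1.
pose b k := block_slope delta k (c k).
have b_gt0 k : 0 < b k by exact: block_slope_gt0.
have c_nd : nondecreasing_seq c.
  apply/nondecreasing_seqP => k; rewrite cS /line lerDl mulr_ge0 ?(ltW (b_gt0 k)) //.
  by have := p_gap k; lra.
have b_noninc : nonincreasing_seq b by exact: block_slope_noninc.
have b_cvg0 : b @ \oo --> 0 by apply: block_slope_cvg0 => // k; rewrite -c0 c_nd.
exists (envelope p c b); split; first exact: envelope_measurable.
split.
- by move=> x _; exact: envelope_ge0.
- by move=> x y; exact: envelope_subadditive.
- exact: envelope_littleo.
- apply: (expR_envelope_mean_le p0 c0 p_gap cS b_gt0 b_noninc xi_ge0
    (budget_sum_le delta_gt0)) => k.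
  have /andP[_ mean_le] := block_mean k.
  rewrite -(block_slope_costE delta k (c k)) [in leRHS]EFinM.
  by apply: lee_wpmul2l => //; rewrite lee_fin (ltW (b_gt0 k)).
- by apply: mul_expR_envelope_mean => // k; have /andP[] := block_mean k.
Qed.
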